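(* For every finite hypergraph $H$, $\mathrm{ch}_{um}(H)\le\Delta(H)+1$.
   Context: A hypergraph $H=(V,\mathcal E)$ has finite vertex set and nonempty hyperedges. $\Delta(H)$ is the maximum, over $v\in V$, of the number of hyperedges containing $v$. A coloring $C\colon V\to\mathbb Z_{>0}$ is unique-maximum if in every hyperedge the maximum color is attained by exactly one vertex. The um-choice number $\mathrm{ch}_{um}(H)$ is the minimum $k$ such that for every family $\{L_v\}_{v\in V}$ of sets of positive integers with $|L_v|\ge k$ there is a unique-maximum coloring $C$ with $C(v)\in L_v$ for all $v$. *)

From mathcomp Require Import all_boot.
Set Implicit Arguments. Unset Strict Implicit. Unset Printing Implicit Defensive.

Definition hypergraph (V : finType) (E : {set {set V}}) : Prop :=
  forall e, e \in E -> e != set0.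

Definition max_degree (V : finType) (E : {set {set V}}) : nat :=
  \max_(v : V) #|[set e in E | v \in e]|.

(* |L| >= k for a (possibly infinite) set L of naturals. *)
Definition card_ge (L : pred nat) (k : nat) : Prop :=
  exists s : seq nat, [/\ uniq s, size s = k & all (fun x => L x) s].

Definition um_coloring (V : finType) (E : {set {set V}}) (C : V -> nat) : Prop :=
  (forall v, 0 < C v) /\
  forall e, e \in E ->
    exists2 x, x \in e & forall y, y \in e -> y != x -> C y < C x.

Definition um_choosable (V : finType) (E : {set {set V}}) (k : nat) : Prop :=
  forall L : V -> pred nat,
    (forall v, (forall c, L v c -> 0 < c) /\ card_ge (L v) k) ->
    exists C : V -> nat, um_coloring E C /\ forall v, L v (C v).

From mathcomp Require Import all_boot.

Set Implicit Arguments.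
Unset Strict Implicit.
Unset Printing Implicit Defensive.

(* Colour the vertices one at a time.  When a vertex v is coloured, each of
   the at most deg(v) < k hyperedges through v already has a coloured maximum
   on its coloured part; the list of v has k colours, so one of them differs
   from all these maxima.  Then in every hyperedge through v either v becomes
   the new unique maximum or the old unique maximum survives. *)

Definition unique_max_on (V : finType) (C : V -> nat) (A : {set V}) : Prop :=
  exists2 x, x \in A & forall y, y \in A -> y != x -> C y < C x.

Definition degree (V : finType) (E : {set {set V}}) (v : V) : nat :=
  #|[set e in E | v \in e]|.

Lemma degree_le_max_degree (V : finType) (E : {set {set V}}) (v : V) :
  degree E v <= max_degree E.
Proof. exact: (@leq_bigmax _ (fun v => degree E v)). Qed.

Section UniqueMax.

Variables (V : finType) (C : V -> nat).

Lemma unique_max_on_set1 (v : V) : unique_max_on C [set v].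
Proof. by exists v => [|y /set1P ->]; rewrite ?set11 ?eqxx. Qed.

Lemma eq_unique_max_on (C' : V -> nat) (A : {set V}) :
  {in A, C =1 C'} -> unique_max_on C A -> unique_max_on C' A.
Proof.
move=> eqCC' [x xA maxx]; exists x => // y yA yx.
by rewrite -!eqCC' //; apply: maxx.
Qed.

Lemma bigmax_unique_max (A : {set V}) (x : V) :
  x \in A -> (forall y, y \in A -> y != x -> C y < C x) ->
  \max_(y in A) C y = C x.
Proof.
move=> xA maxx; apply/eqP; rewrite eqn_leq leq_bigmax_cond // andbT.
apply/bigmax_leqP => y yA; case: (eqVneq y x) => [-> //|yx].
exact/ltnW/maxx.
Qed.

Lemma unique_max_on_setU1 (A : {set V}) (v : V) (c : nat) :
  v \notin A -> unique_max_on C A -> c != \max_(y in A) C y ->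
  unique_max_on [eta C with v |-> c] (v |: A).
Proof.
move=> vNA [x xA maxx]; rewrite (bigmax_unique_max xA maxx).
have neq_v y : y \in A -> (y == v) = false.
  by move=> yA; apply: contraNF vNA => /eqP <-.
case: ltngtP => // [ltcx | ltxc] _.
  exists x => [|y]; first by rewrite setU1r.
  rewrite /= (neq_v x xA) => /setU1P [-> _|yA yx]; first by rewrite eqxx.
  by rewrite neq_v //; apply: maxx.
exists v => [|y]; first exact: setU11.
rewrite /= eqxx => /setU1P [-> /eqP //|yA _].
rewrite neq_v //; apply: leq_ltn_trans ltxc.
by case: (eqVneq y x) => [-> //|yx]; apply/ltnW/maxx.
Qed.

End UniqueMax.

Lemma card_ge_avoid (L : pred nat) (k : nat) (F : seq nat) :
  card_ge L k -> size F < k -> exists2 c, L c & c \notin F.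
Proof.
move=> [s [us <- /allP Ls]] ltFs.
have /hasP [c cs cNF] : has (predC (mem F)) s.
  apply: contraTT ltFs; rewrite has_predC negbK -leqNgt => /allP sF.
  exact: uniq_leq_size.
by exists c => //; apply: Ls.
Qed.

Section GreedyColoring.

Variables (V : finType) (E : {set {set V}}) (k : nat) (L : V -> pred nat).
Hypothesis card_L : forall v, card_ge (L v) k.
Hypothesis degree_lt : forall v, degree E v < k.

Definition um_coloring_on (C : V -> nat) (U : {set V}) : Prop :=
  forall e, e \in E -> e :&: U != set0 -> unique_max_on C (e :&: U).

Lemma um_coloring_on_extend (C : V -> nat) (U : {set V}) (v : V) :
  v \notin U -> um_coloring_on C U ->
  exists2 c, L v c & um_coloring_on [eta C with v |-> c] (v |: U).
Proof.
move=> vNU umC.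
pose maxima := [seq \max_(y in e :&: U) C y | e <- enum [set e in E | v \in e]].
have [c Lc cNmaxima] : exists2 c, L v c & c \notin maxima.
  by apply: (card_ge_avoid (card_L v)); rewrite size_map -cardE degree_lt.
exists c => // e eE; have vNeU : v \notin e :&: U by rewrite inE (negbTE vNU) andbF.
rewrite setIUr; have [ve | vNe] := boolP (v \in e); last first.
  have -> : e :&: [set v] = set0 by apply/disjoint_setI0; rewrite disjoint_sym disjoints1.
  rewrite set0U => eU0; apply: eq_unique_max_on (umC e eE eU0) => y /=.
  by case: eqP => // ->; rewrite inE (negbTE vNe).
rewrite (setIidPr _) ?sub1set // => _.
have [-> | eU0] := eqVneq (e :&: U) set0; first by rewrite setU0; apply: unique_max_on_set1.
apply: unique_max_on_setU1 vNeU (umC e eE eU0) _.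
apply: contraNneq cNmaxima => ->.
by apply: map_f; rewrite mem_enum inE eE ve.
Qed.

Lemma greedy_um_coloring :
  exists C : V -> nat, um_coloring_on C [set: V] /\ forall v, L v (C v).
Proof.
have [C0 LC0] : exists C0 : V -> nat, forall v, L v (C0 v).
  apply: (@fin_all_exists V (fun=> nat) (fun v c => L v c)) => v.
  have [c Lc _] := @card_ge_avoid _ _ [::] (card_L v) (leq_ltn_trans (leq0n _) (degree_lt v)).
  by exists c.
suff [C [umC LC]] : exists C : V -> nat,
    um_coloring_on C [set:: enum V] /\ forall v, L v (C v).
  have setT_enum : [set:: enum V] = [set: V] by apply/setP => x; rewrite !inE mem_enum.
  by exists C; rewrite -setT_enum.
elim: (enum V) => [|v s [C [umC LC]]].
  by exists C0; split=> // e _; rewrite set_nil setI0 eqxx.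
rewrite set_cons; have [vs | vNs] := boolP (v \in [set:: s]).
  by exists C; rewrite (setUidPr _) ?sub1set.
have [c Lc umCc] := um_coloring_on_extend vNs umC.
by exists [eta C with v |-> c]; split=> // y /=; case: eqP => [-> | _].
Qed.

End GreedyColoring.

Theorem um_choosable_gt_degree (V : finType) (E : {set {set V}}) (k : nat) :
  hypergraph E -> (forall v, degree E v < k) -> um_choosable E k.
Proof.
move=> hE degree_lt L HL.
have [C [umC LC]] := greedy_um_coloring (fun v => (HL v).2) degree_lt.
exists C; split=> //; split=> [v | e eE]; first exact: (HL v).1.
by have := umC e eE; rewrite setIT; apply; apply: hE.
Qed.

Theorem corollary5p4 (V : finType) (E : {set {set V}}) :
  hypergraph E -> um_choosable E (max_degree E).+1.
Proof.
by move=> hE; apply: um_choosable_gt_degree => // v; rewrite ltnS degree_le_max_degree.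
Qed.
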